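(* Let $\mathcal{A}$ be an association scheme with splitting field $L$ and Krein field $K$, and let $\sigma\in\mathrm{Gal}(L/\mathbb{Q})$. Then the map $\hat\sigma$ on $L[\mathcal{A}]$, defined by $M^{\hat\sigma}=\sum_ja_jE_j^\sigma$ for $M=\sum_ja_jE_j$, is a Bose–Mesner algebra automorphism of $L[\mathcal{A}]$ if and only if $\sigma$ fixes every element of $K$, i.e. $\sigma\in\mathrm{Gal}(L/K)$.
   Context: An association scheme on $v$ vertices is a set $\mathcal{A}=\{A_0,\ldots,A_d\}$ of $v\times v$ $(0,1)$-matrices with $A_0=I$, $\sum_iA_i=J$, closed under transpose, pairwise commuting, and with all products $A_iA_j$ in the span of $\mathcal{A}$. Its principal idempotents are the pairwise orthogonal Hermitian idempotents $E_0,\ldots,E_d$ summing to $I$ that form a basis of the span, with $A_iE_j=p_i(j)E_j$; the splitting field is $L=\mathbb{Q}(p_i(j):i,j)$ and $L[\mathcal{A}]$ is the $L$-span of $\mathcal{A}$. The Krein parameters $q_{ij}(k)$ are defined by $E_i\circ E_j=\frac1v\sum_kq_{ij}(k)E_k$ ($\circ$ the Schur product), and the Krein field $K$ is $\mathbb{Q}$ adjoined all Krein parameters (it is a subfield of $L$). For $\sigma\in\mathrm{Gal}(L/\mathbb{Q})$, $M^\sigma$ denotes entrywise application of $\sigma$; it permutes $\{E_0,\ldots,E_d\}$. A Bose–Mesner algebra automorphism of $L[\mathcal{A}]$ is an invertible $L$-linear map $\psi$ with $(MN)^\psi=M^\psi N^\psi$, $(M\circ N)^\psi=M^\psi\circ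 N^\psi$ and $(M^* )^\psi=(M^\psi)^*$. *)

From HB Require Import structures.
From mathcomp Require Import all_boot all_order all_algebra all_field.
Set Implicit Arguments. Unset Strict Implicit. Unset Printing Implicit Defensive.
Import Order.TTheory GRing.Theory Num.Theory.
Local Open Scope ring_scope.

(* All matrices are v x v matrices over algC (complex algebraic numbers);
   the classes / idempotents are indexed by 'I_d.+1 (index 0 = A_0 = I). *)

Definition in_span (v d : nat) (F : 'I_d.+1 -> 'M[algC]_v) (M : 'M[algC]_v) : Prop :=
  exists c : 'I_d.+1 -> algC, M = \sum_k c k *: F k.

Definition conjT (v : nat) (M : 'M[algC]_v) : 'M[algC]_v := (map_mx (@Num.conj algC) M)^T.

Definition schur (v : nat) (M N : 'M[algC]_v) : 'M[algC]_v :=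
  \matrix_(i, j) (M i j * N i j).

Definition assoc_scheme (v d : nat) (A : 'I_d.+1 -> 'M[algC]_v) : Prop :=
  [/\ (forall i x y, A i x y = 0 \/ A i x y = 1),
      A ord0 = 1%:M,
      \sum_i A i = const_mx 1,
      (forall i, exists j, (A i)^T = A j) &
      (forall i j, A i *m A j = A j *m A i /\ in_span A (A i *m A j))].

Definition principal_idempotents (v d : nat) (A E : 'I_d.+1 -> 'M[algC]_v) : Prop :=
  [/\ (forall i j, E i *m E j = if i == j then E i else 0),
      (forall i, conjT (E i) = E i),
      \sum_i E i = 1%:M,
      (forall i, in_span A (E i) /\ in_span E (A i)) &
      (forall c : 'I_d.+1 -> algC, \sum_j c j *: E j = 0 -> forall j, c j = 0)].

Definition eigenvalues (v d : nat) (A E : 'I_d.+1 -> 'M[algC]_v)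
  (p : 'I_d.+1 -> 'I_d.+1 -> algC) : Prop :=
  forall i j, A i *m E j = p i j *: E j.

Definition krein_params (v d : nat) (E : 'I_d.+1 -> 'M[algC]_v)
  (q : 'I_d.+1 -> 'I_d.+1 -> 'I_d.+1 -> algC) : Prop :=
  forall i j, schur (E i) (E j) = (v%:R)^-1 *: \sum_k q i j k *: E k.

Definition gen_field (S : algC -> Prop) (x : algC) : Prop :=
  forall P : {pred algC}, divring_closed P -> (forall y, S y -> y \in P) -> x \in P.

Definition splitting_field (d : nat) (p : 'I_d.+1 -> 'I_d.+1 -> algC) : algC -> Prop :=
  gen_field (fun x => exists i j, x = p i j).

Definition krein_field (d : nat) (q : 'I_d.+1 -> 'I_d.+1 -> 'I_d.+1 -> algC)
  : algC -> Prop :=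
  gen_field (fun x => exists i j k, x = q i j k).

Definition LspanA (v d : nat) (L : algC -> Prop) (A : 'I_d.+1 -> 'M[algC]_v)
  (M : 'M[algC]_v) : Prop :=
  exists a : 'I_d.+1 -> algC, (forall i, L (a i)) /\ M = \sum_i a i *: A i.

(* The map sigma-hat: for M = sum_j a_j E_j, M^hat = sum_j a_j E_j^sigma.
   The coordinate a_j of M in the basis E is recovered as
   tr(M E_j) / tr(E_j) (since M E_j = a_j E_j and tr E_j = rank E_j <> 0). *)
Definition sigma_hat (v d : nat) (sigma : algC -> algC) (E : 'I_d.+1 -> 'M[algC]_v)
  (M : 'M[algC]_v) : 'M[algC]_v :=
  \sum_j (\tr (M *m E j) / \tr (E j)) *: map_mx sigma (E j).

Definition BM_automorphism (v : nat) (L : algC -> Prop) (S : 'M[algC]_v -> Prop)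
  (psi : 'M[algC]_v -> 'M[algC]_v) : Prop :=
  (forall M, S M -> S (psi M)) /\
  (forall M N, S M -> S N -> psi M = psi N -> M = N) /\
  (forall N, S N -> exists M, S M /\ psi M = N) /\
  (forall c M N, L c -> S M -> S N -> psi (c *: M + N) = c *: psi M + psi N) /\
  (forall M N, S M -> S N -> psi (M *m N) = psi M *m psi N) /\
  (forall M N, S M -> S N -> psi (schur M N) = schur (psi M) (psi N)) /\
  (forall M, S M -> psi (conjT M) = conjT (psi M)).

From HB Require Import structures.
From mathcomp Require Import all_boot all_order all_algebra all_field fingroup perm.
Set Implicit Arguments. Unset Strict Implicit. Unset Printing Implicit Defensive.
Import Order.TTheory GRing.Theory Num.Theory.
Local Open Scope ring_scope.

(* Since the A_i are 0/1 matrices, sigma fixes them, so E_j^sigma is again a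
   nonzero idempotent in the Bose-Mesner algebra, and the E_j^sigma are
   pairwise orthogonal; hence they are the E_j up to a permutation pi, and
   sigma-hat is the L-linear map E_j |-> E_(pi j).  Such a map preserves
   ordinary products and conjugate transposes, and maps L[A] onto itself
   because the coordinates of the E_j in the basis A are the entries of the
   inverse of the eigenmatrix (p_i(j)).  Finally, applying sigma entrywise to
   E_i o E_j = v^-1 sum_k q_ij(k) E_k shows that sigma-hat preserves Schur
   products exactly when sigma fixes every Krein parameter. *)

(* A keyed copy of Q, so that a proof of [divring_closed Q] makes the [rpred]
   lemmas available for Q. *)
Definition divring_pred (Q : {pred algC}) (hQ : divring_closed Q) : {pred algC} := Q.
HB.instance Definition _ (Q : {pred algC}) (hQ : divring_closed Q) :=
  GRing.isDivringClosed.Build algC (divring_pred hQ) hQ.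

Lemma gen_fieldP (S : algC -> Prop) x :
  gen_field S x <-> forall Q : divringClosed algC, (forall y, S y -> y \in Q) -> x \in Q.
Proof.
split=> [Sx Q SQ | SxQ P hP SP]; first exact: Sx (divringClosedP Q) SQ.
exact: (SxQ (divring_pred hP)).
Qed.

Lemma gen_field_gen (S : algC -> Prop) x : S x -> gen_field S x.
Proof. by move=> Sx P _ SP; apply: SP. Qed.

Lemma gen_field_sum_mul (S : algC -> Prop) (I : finType) (a b : I -> algC) :
  (forall i, gen_field S (a i)) -> (forall i, gen_field S (b i)) ->
  gen_field S (\sum_i a i * b i).
Proof.
move=> Sa Sb; apply/gen_fieldP => Q SQ.
have inQ c : gen_field S c -> c \in Q by move/gen_fieldP; apply.
by apply: rpred_sum => i _; rewrite rpredM ?inQ.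
Qed.

Lemma gen_field_fixed (S : algC -> Prop) (s : {rmorphism algC -> algC}) x :
  (forall y, S y -> s y = y) -> gen_field S x -> s x = x.
Proof.
move=> sS Sx; have fixed_closed : divring_closed [pred y | s y == y].
  split=> [|a b /eqP sa /eqP sb|a b /eqP sa /eqP sb];
    by rewrite inE ?rmorph1 ?rmorphB ?fmorph_div ?sa ?sb.
by apply/eqP; apply: Sx fixed_closed _ => y /sS /eqP.
Qed.

Lemma det_mxOver (R : comPzRingType) (S : subringClosed R) n (M : 'M[R]_n) :
  M \is a mxOver S -> \det M \in S.
Proof.
move=> /mxOverP SM; apply: rpred_sum => s _.
by rewrite rpredM ?rpredX ?rpredN ?rpred1 // rpred_prod.
Qed.

Lemma invmx_mxOver (R : comUnitRingType) (S : divringClosed R) n (M : 'M[R]_n) :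
  M \is a mxOver S -> invmx M \is a mxOver S.
Proof.
move=> SM; apply/mxOverP => i j; rewrite /invmx; case: ifP => _; last exact: (mxOverP SM).
rewrite !mxE rpredM ?rpredV ?det_mxOver // rpredM ?rpredX ?rpredN ?rpred1 //.
by apply: det_mxOver; apply/mxOverP => k l; rewrite !mxE; apply: (mxOverP SM).
Qed.

Lemma comb_comb (R : pzRingType) (V : lmodType R) (I J : finType)
    (F : J -> V) (a : I -> R) (c : I -> J -> R) :
  \sum_i a i *: \sum_j c i j *: F j = \sum_j (\sum_i a i * c i j) *: F j.
Proof.
under eq_bigr do rewrite scaler_sumr.
rewrite exchange_big /=; apply: eq_bigr => j _; rewrite scaler_suml.
by apply: eq_bigr => i _; rewrite scalerA.
Qed.

Lemma map_mx01 (s : {rmorphism algC -> algC}) m n (M : 'M[algC]_(m, n)) :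
  (forall x y, M x y = 0 \/ M x y = 1) -> map_mx s M = M.
Proof.
by move=> M01; apply/matrixP => x y; rewrite mxE; case: (M01 x y) => ->; rewrite ?rmorph0 ?rmorph1.
Qed.

Lemma mxtrace_mulmx_conjT_eq0 n (M : 'M[algC]_n) :
  \tr (M *m conjT M) = 0 -> M = 0.
Proof.
have -> : \tr (M *m conjT M) = \sum_i \sum_j M i j * (M i j)^*.
  by apply: eq_bigr => i _; rewrite !mxE; apply: eq_bigr => j _; rewrite !mxE.
move=> tr0; apply/matrixP => i j; rewrite mxE; apply/eqP; rewrite -mul_conjC_eq0; apply/eqP.
have row_ge0 i' : 0 <= \sum_j M i' j * (M i' j)^*.
  by apply: sumr_ge0 => j' _; apply: mul_conjC_ge0.
have row0 := @psumr_eq0P _ _ _ _ (fun i' _ => row_ge0 i') tr0 i isT.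
exact: @psumr_eq0P _ _ _ _ (fun j' _ => mul_conjC_ge0 (M i j')) row0 j isT.
Qed.

Section Combinations.
Variables (I : finType) (v : nat) (F : I -> 'M[algC]_v) (a : I -> algC).

Lemma comb_delta k : \sum_i (i == k)%:R *: F i = F k.
Proof. by rewrite (bigD1 k) //= eqxx scale1r big1 ?addr0 // => i /negbTE ->; rewrite scale0r. Qed.

Lemma conjT_comb : conjT (\sum_i a i *: F i) = \sum_i (a i)^* *: conjT (F i).
Proof.
apply/matrixP => x y; rewrite /conjT !mxE summxE rmorph_sum summxE.
by apply: eq_bigr => i _; rewrite !mxE rmorphM.
Qed.

Lemma map_comb (s : {rmorphism algC -> algC}) :
  map_mx s (\sum_i a i *: F i) = \sum_i s (a i) *: map_mx s (F i).
Proof.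
apply/matrixP => x y; rewrite !mxE summxE rmorph_sum summxE.
by apply: eq_bigr => i _; rewrite !mxE rmorphM.
Qed.

Lemma schur_combl N : schur (\sum_i a i *: F i) N = \sum_i a i *: schur (F i) N.
Proof.
apply/matrixP => x y; rewrite /schur !mxE summxE mulr_suml summxE.
by apply: eq_bigr => i _; rewrite !mxE mulrA.
Qed.

Lemma schur_combr N : schur N (\sum_i a i *: F i) = \sum_i a i *: schur N (F i).
Proof.
apply/matrixP => x y; rewrite /schur !mxE summxE mulr_sumr summxE.
by apply: eq_bigr => i _; rewrite !mxE mulrCA.
Qed.

End Combinations.

Lemma map_schur (s : {rmorphism algC -> algC}) v (M N : 'M[algC]_v) :
  map_mx s (schur M N) = schur (map_mx s M) (map_mx s N).
Proof. by apply/matrixP => x y; rewrite !mxE rmorphM. Qed.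

Section OrthogonalIdempotents.
Variables (I : finType) (v : nat) (F : I -> 'M[algC]_v).
Hypothesis F_mul : forall i j, F i *m F j = if i == j then F i else 0.

Lemma comb_mulmx (a : I -> algC) j : (\sum_i a i *: F i) *m F j = a j *: F j.
Proof.
rewrite mulmx_suml (bigD1 j) //= big1 ?addr0; first by rewrite -scalemxAl F_mul eqxx.
by move=> i /negbTE ij; rewrite -scalemxAl F_mul ij scaler0.
Qed.

Lemma mulmx_comb (a b : I -> algC) :
  (\sum_i a i *: F i) *m (\sum_i b i *: F i) = \sum_i (a i * b i) *: F i.
Proof.
rewrite mulmx_sumr; apply: eq_bigr => i _.
by rewrite -scalemxAr comb_mulmx scalerA mulrC.
Qed.

Hypothesis F_neq0 : forall i, F i != 0.

Lemma comb_inj (a b : I -> algC) :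
  \sum_i a i *: F i = \sum_i b i *: F i -> forall i, a i = b i.
Proof.
move=> ab i; have := comb_mulmx (fun j => a j - b j) i.
rewrite (eq_bigr (fun j => a j *: F j - b j *: F j)) => [|j _]; last exact: scalerBl.
rewrite sumrB ab subrr mul0mx => /esym/eqP.
by rewrite scalemx_eq0 (negbTE (F_neq0 i)) orbF subr_eq0 => /eqP.
Qed.

End OrthogonalIdempotents.

Lemma sigma_hat_is_linear (s : algC -> algC) v d (E : 'I_d.+1 -> 'M[algC]_v) :
  linear (sigma_hat s E).
Proof.
move=> c M N; rewrite /sigma_hat scaler_sumr -big_split; apply: eq_bigr => j _ /=.
by rewrite mulmxDl -scalemxAl mxtraceD mxtraceZ mulrDl scalerDl scalerA mulrA.
Qed.

HB.instance Definition _ (s : algC -> algC) v d (E : 'I_d.+1 -> 'M[algC]_v) :=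
  GRing.isLinear.Build algC 'M[algC]_v 'M[algC]_v *:%R (sigma_hat s E)
    (sigma_hat_is_linear s E).

Section BoseMesner.
Variables (v d : nat) (A E : 'I_d.+1 -> 'M[algC]_v).
Variables (p : 'I_d.+1 -> 'I_d.+1 -> algC) (q : 'I_d.+1 -> 'I_d.+1 -> 'I_d.+1 -> algC).
Variable sigma : {rmorphism algC -> algC}.
Hypotheses (hA : assoc_scheme A) (hE : principal_idempotents A E).
Hypotheses (hp : eigenvalues A E p) (hq : krein_params E q).

Local Notation L := (splitting_field p).
Local Notation Es j := (map_mx sigma (E j)).
Local Notation sh := (sigma_hat sigma E).

Lemma E_mul i j : E i *m E j = if i == j then E i else 0.
Proof. by case: hE. Qed.

Lemma E_conjT i : conjT (E i) = E i.
Proof. by case: hE. Qed.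

Lemma E_sum1 : \sum_i E i = 1%:M.
Proof. by case: hE. Qed.

Lemma E_inA i : in_span A (E i).
Proof. by case: hE => _ _ _ /(_ i) []. Qed.

Lemma E_neq0 j : E j != 0.
Proof.
apply/eqP => Ej0; case: hE => _ _ _ _ free.
suff /free/(_ j)/eqP : \sum_k (k == j)%:R *: E k = 0 by rewrite eqxx oner_eq0.
by rewrite big1 // => k _; case: eqP => [->|_]; rewrite ?Ej0 ?scale0r ?scaler0.
Qed.

Lemma v_neq0 : v != 0%N.
Proof.
apply: contra_neq (E_neq0 ord0) => v0.
by apply/matrixP => [[x lt_x_v]]; exfalso; rewrite v0 in lt_x_v.
Qed.

Lemma mxtrace_E_neq0 j : \tr (E j) != 0.
Proof.
apply: contra_neq (E_neq0 j) => tr0; apply: mxtrace_mulmx_conjT_eq0.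
by rewrite E_conjT E_mul eqxx.
Qed.

Lemma A_sumE i : A i = \sum_j p i j *: E j.
Proof. by rewrite -[A i]mulmx1 -E_sum1 mulmx_sumr; apply: eq_bigr => j _; apply: hp. Qed.

Lemma sigma_hat_comb a : sh (\sum_j a j *: E j) = \sum_j a j *: Es j.
Proof.
by apply: eq_bigr => j _; rewrite comb_mulmx ?mxtraceZ ?mulfK ?mxtrace_E_neq0 //; apply: E_mul.
Qed.

Lemma sigma_hatE k : sh (E k) = Es k.
Proof. by rewrite -{1}(comb_delta E k) sigma_hat_comb comb_delta. Qed.

Lemma Es_mul i j : Es i *m Es j = if i == j then Es i else 0.
Proof. by rewrite -map_mxM E_mul; case: eqP => // _; rewrite map_mx0. Qed.

Lemma Es_neq0 j : Es j != 0.
Proof.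
apply: contra_neq (E_neq0 j) => Esj0.
by apply: (map_mx_inj (f := sigma)); rewrite Esj0 map_mx0.
Qed.

Lemma Es_sumE j : exists b : 'I_d.+1 -> algC, Es j = \sum_k b k *: E k.
Proof.
case: (E_inA j) => c ->; rewrite map_comb.
have A_fixed i : map_mx sigma (A i) = A i by apply: map_mx01; case: hA.
exists (fun k => \sum_i sigma (c i) * p i k).
by under eq_bigr do rewrite A_fixed A_sumE; rewrite comb_comb.
Qed.

Lemma Es_mulE j l : Es j *m E l != 0 -> Es j *m E l = E l.
Proof.
case: (Es_sumE j) => b Esj.
have Esj_El : Es j *m E l = b l *: E l by rewrite Esj comb_mulmx //; apply: E_mul.
rewrite Esj_El scalemx_eq0 negb_or => /andP [b_neq0 _].
have : Es j *m (Es j *m E l) = Es j *m E l by rewrite mulmxA Es_mul eqxx.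
rewrite Esj_El -scalemxAr Esj_El scalerA => /eqP.
rewrite -subr_eq0 -scalerBl scalemx_eq0 (negbTE (E_neq0 l)) orbF.
rewrite -{3}[b l]mulr1 -mulrBr mulf_eq0 (negbTE b_neq0) subr_eq0 => /eqP ->.
by rewrite scale1r.
Qed.

Lemma Es_mulE_uniq j j' l : Es j *m E l != 0 -> Es j' *m E l != 0 -> j = j'.
Proof.
move=> Esj_El Esj'_El; case: (eqVneq j j') => // neq_jj'; case/negP: (E_neq0 l).
by rewrite -(Es_mulE Esj_El) -(Es_mulE Esj'_El) mulmxA Es_mul (negbTE neq_jj') mul0mx.
Qed.

Lemma Es_mulE_ex j : exists l, Es j *m E l != 0.
Proof.
apply/existsP; apply: contraTT (Es_neq0 j) => /existsPn Esj_E0.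
by rewrite -[Es j]mulmx1 -E_sum1 mulmx_sumr big1 ?eqxx // => l _; apply/eqP/negbNE.
Qed.

Lemma Es_perm : exists pi : {perm 'I_d.+1}, forall j, Es j = E (pi j).
Proof.
have [pi piP] := fin_all_exists Es_mulE_ex.
have pi_inj : injective pi.
  by move=> j j' eq_pi; apply: (Es_mulE_uniq (piP j)); rewrite eq_pi.
(* [pi j] is the unique [l] with [E_j^sigma E_l != 0]. *)
exists (perm pi_inj) => j; rewrite permE.
rewrite -[Es j]mulmx1 -E_sum1 mulmx_sumr (bigD1 (pi j)) //= big1 ?addr0.
  exact: Es_mulE (piP j).
move=> l neq_l; apply/eqP; apply: contraNT neq_l => Esj_El; apply/eqP.
have pi_pi' : pi (((perm pi_inj)^-1)%g l) = l by rewrite -permE permKV.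
have := piP (((perm pi_inj)^-1)%g l); rewrite pi_pi' => /(Es_mulE_uniq Esj_El) ->.
by rewrite pi_pi'.
Qed.

Lemma eigenmx_left_inverse (c : 'I_d.+1 -> 'I_d.+1 -> algC) :
    (forall k, E k = \sum_i c k i *: A i) ->
  \matrix_(k, i) c k i *m \matrix_(i, j) p i j = 1%:M.
Proof.
move=> Ec; apply/matrixP => k j; rewrite !mxE.
have E_k : \sum_l (\sum_i c k i * p i l) *: E l = \sum_l (l == k)%:R *: E l.
  by rewrite -comb_comb comb_delta Ec; under [RHS]eq_bigr do rewrite A_sumE.
rewrite (eq_bigr (fun i => c k i * p i j)) => [|i _]; last by rewrite !mxE.
by rewrite (comb_inj E_mul E_neq0 E_k j) eq_sym.
Qed.

Lemma E_sumA_in_L : exists c : 'I_d.+1 -> 'I_d.+1 -> algC,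
  (forall k i, L (c k i)) /\ forall k, E k = \sum_i c k i *: A i.
Proof.
have [c Ec] := fin_all_exists E_inA; exists c; split => // k i.
have CP := eigenmx_left_inverse Ec.
have [_ P_unit] := mulmx1_unit CP.
apply/gen_fieldP => Q LQ.
have P_Q : \matrix_(i, j) p i j \is a mxOver Q.
  by apply/mxOverP => a b; rewrite mxE; apply: LQ; exists a, b.
have C_inv : \matrix_(k, i) c k i = invmx (\matrix_(i, j) p i j).
  by rewrite -[LHS](mulmxK P_unit) CP mul1mx.
by have := mxOverP (invmx_mxOver P_Q) k i; rewrite -C_inv mxE.
Qed.

Lemma LspanA_E M :
  LspanA L A M <-> exists a, (forall j, L (a j)) /\ M = \sum_j a j *: E j.
Proof.
split=> [[a [La ->]] | [a [La ->]]].
  exists (fun j => \sum_i a i * p i j); split.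
    by move=> j; apply: gen_field_sum_mul => // i; apply: gen_field_gen; exists i, j.
  by under eq_bigr do rewrite A_sumE; rewrite comb_comb.
have [c [Lc Ec]] := E_sumA_in_L.
exists (fun i => \sum_j a j * c j i); split.
  by move=> i; apply: gen_field_sum_mul => // j; apply: Lc.
by under eq_bigr do rewrite Ec; rewrite comb_comb.
Qed.

Lemma E_LspanA l : LspanA L A (E l).
Proof. by have [c [Lc Ec]] := E_sumA_in_L; exists (c l). Qed.

Lemma sigma_hat_schur_E i j :
  sh (schur (E i) (E j)) = schur (sh (E i)) (sh (E j)) <->
  forall k, sigma (q i j k) = q i j k.
Proof.
have vinv_neq0 : (v%:R : algC)^-1 != 0 by rewrite invr_eq0 pnatr_eq0 v_neq0.
have sigma_vinv : sigma (v%:R^-1) = v%:R^-1 by rewrite fmorphV rmorph_nat.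
rewrite !sigma_hatE -map_schur hq linearZ /= sigma_hat_comb map_mxZ map_comb sigma_vinv.
split=> [/(scalerI vinv_neq0)/(comb_inj Es_mul Es_neq0) q_eq k | q_fixed]; first exact/esym/q_eq.
by congr (_ *: _); apply: eq_bigr => k _; rewrite q_fixed.
Qed.

Lemma krein_fixed_of_BM :
  BM_automorphism L (LspanA L A) sh -> forall x, krein_field q x -> sigma x = x.
Proof.
move=> [_ [_ [_ [_ [_ [sh_schur _]]]]]] x; apply: gen_field_fixed => _ [i [j [k ->]]].
by move: k; apply/sigma_hat_schur_E; apply: sh_schur; apply: E_LspanA.
Qed.

Section PermutedIdempotents.
Variable pi : {perm 'I_d.+1}.
Hypothesis Es_pi : forall j, Es j = E (pi j).

Lemma sigma_hat_permE a : sh (\sum_j a j *: E j) = \sum_j a ((pi^-1)%g j) *: E j.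
Proof.
rewrite sigma_hat_comb (reindex_inj (@perm_inj _ (pi^-1)%g)) /=.
by apply: eq_bigr => j _; rewrite Es_pi permKV.
Qed.

Lemma sigma_hat_LspanA M : LspanA L A M -> LspanA L A (sh M).
Proof.
case/LspanA_E => a [La ->]; apply/LspanA_E.
by exists (fun j => a ((pi^-1)%g j)); rewrite sigma_hat_permE.
Qed.

Lemma sigma_hat_LspanA_onto N : LspanA L A N -> exists M, LspanA L A M /\ sh M = N.
Proof.
case/LspanA_E => b [Lb ->]; exists (\sum_j b (pi j) *: E j); split.
  by apply/LspanA_E; exists (fun j => b (pi j)).
by rewrite sigma_hat_permE; under eq_bigr do rewrite permKV.
Qed.

Lemma sigma_hat_conjT M : LspanA L A M -> sh (conjT M) = conjT (sh M).
Proof.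
case/LspanA_E => a [_ ->]; rewrite conjT_comb; under eq_bigr do rewrite E_conjT.
by rewrite !sigma_hat_permE conjT_comb; under [RHS]eq_bigr do rewrite E_conjT.
Qed.

End PermutedIdempotents.

Lemma sigma_hat_inj_LspanA M N :
  LspanA L A M -> LspanA L A N -> sh M = sh N -> M = N.
Proof.
case/LspanA_E => a [_ ->]; case/LspanA_E => b [_ ->]; rewrite !sigma_hat_comb.
by move/(comb_inj Es_mul Es_neq0) => ab; apply: eq_bigr => j _; rewrite ab.
Qed.

Lemma sigma_hat_mulmx M N :
  LspanA L A M -> LspanA L A N -> sh (M *m N) = sh M *m sh N.
Proof.
case/LspanA_E => a [_ ->]; case/LspanA_E => b [_ ->].
by rewrite (mulmx_comb E_mul) !sigma_hat_comb (mulmx_comb Es_mul).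
Qed.

Lemma sigma_hat_schur (q_fixed : forall i j k, sigma (q i j k) = q i j k) M N :
  LspanA L A M -> LspanA L A N -> sh (schur M N) = schur (sh M) (sh N).
Proof.
case/LspanA_E => a [_ ->]; case/LspanA_E => b [_ ->].
rewrite !sigma_hat_comb !schur_combl linear_sum.
apply: eq_bigr => i _; rewrite linearZ; congr (_ *: _).
rewrite !schur_combr linear_sum.
apply: eq_bigr => j _; rewrite linearZ; congr (_ *: _).
by rewrite -!sigma_hatE; apply/sigma_hat_schur_E.
Qed.

Lemma BM_of_krein_fixed :
  (forall x, krein_field q x -> sigma x = x) -> BM_automorphism L (LspanA L A) sh.
Proof.
move=> K_fixed.
have q_fixed i j k : sigma (q i j k) = q i j k.
  by apply: K_fixed; apply: gen_field_gen; exists i, j, k.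
have [pi Es_pi] := Es_perm.
split; first exact: sigma_hat_LspanA Es_pi.
split; first exact: sigma_hat_inj_LspanA.
split; first exact: sigma_hat_LspanA_onto Es_pi.
split; first by move=> c M N _ _ _; rewrite linearP.
split; first exact: sigma_hat_mulmx.
split; first exact: sigma_hat_schur q_fixed.
exact: sigma_hat_conjT Es_pi.
Qed.

End BoseMesner.

Theorem theorem4p2 (v d : nat) (A E : 'I_d.+1 -> 'M[algC]_v)
  (p : 'I_d.+1 -> 'I_d.+1 -> algC) (q : 'I_d.+1 -> 'I_d.+1 -> 'I_d.+1 -> algC)
  (sigma : {rmorphism algC -> algC}) :
  assoc_scheme A -> principal_idempotents A E -> eigenvalues A E p ->
  krein_params E q ->
  BM_automorphism (splitting_field p) (LspanA (splitting_field p) A)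
    (sigma_hat sigma E)
  <-> (forall x, krein_field q x -> sigma x = x).
Proof.
move=> hA hE hp hq; split; first exact: krein_fixed_of_BM.
exact: BM_of_krein_fixed.
Qed.
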